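(* Let $\Gamma$ be a finite connected trivalent ribbon graph with set of oriented edges $E$, let $z:E\to\mathbb{R}$ satisfy $z(\rho_1\gamma)=z(\gamma)$ for all $\gamma\in E$, and fix $\epsilon\in E$. Then the image $\Delta(\Gamma,z,\epsilon):=CHF(B(E,\epsilon))\subset PSL_2(\mathbb{R})$ is a Fuchsian group (a discrete subgroup of $PSL_2(\mathbb{R})$).
   Context: A trivalent ribbon graph is a graph all of whose vertices have valency $3$, together with a cyclic order on the edge-ends at each vertex. $E$ denotes the set of oriented edges of $\Gamma$. The group $C_2^+[3]=\langle \rho_0,\rho_1 \mid \rho_1^2=\rho_0^3=1\rangle$ acts on $E$: $\rho_0$ sends an oriented edge to the next oriented edge (in the cyclic order, counterclockwise) with the same origin, and $\rho_1$ reverses the orientation of the edge. For $\epsilon\in E$, $B(E,\epsilon)=\{w\in C_2^+[3] : w\epsilon=\epsilon\}$ is its stabilizer. For $a\in\mathbb{R}$ put $X_a=\begin{pmatrix}0&-e^{a/2}\\ e^{-a/2}&0\end{pmatrix}$ and $L=\begin{pmatrix}0&1\\-1&-1\end{pmatrix}$, regarded in $PSL_2(\mathbb{R})$. The map $CHF: C_2^+[3]\to PSL_2(\mathbb{R})$ (depending on $\Gamma,z,\epsilon$) is defined inductively on words by $CHF(1)=1$, $CHF(\rho_0 w)=L\cdot CHF(w)$, $CHF(\rho_1 w)=X_{z(w\epsilon)}\cdot CHF(w)$; it is well defined on the group since $L^3=1$ and $X_aX_a=1$ in $PSL_2(\mathbb{R})$. Its restriction to $B(E,\epsilon)$ is a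 homomorphism, so $\Delta(\Gamma,z,\epsilon)$ is a subgroup of $PSL_2(\mathbb{R})$. *)

From HB Require Import structures.
From mathcomp Require Import all_boot all_order all_algebra perm.
From mathcomp Require Import reals.
From mathcomp Require Import sequences exp.
Set Implicit Arguments. Unset Strict Implicit. Unset Printing Implicit Defensive.
Import Order.TTheory GRing.Theory Num.Theory.
Local Open Scope ring_scope.

(* Generators of C_2^+[3] = < rho0, rho1 | rho1^2 = rho0^3 = 1 >.
   Elements of the group are represented by words in the generators. *)
Inductive gen := g_rho0 | g_rho1.
Definition word := seq gen.

Section Ribbon.
Variables (E : finType) (rho0 rho1 : {perm E}).

(* action of a word; the head letter acts last: (rho w) e = rho (w e) *)
Fixpoint wact (w : word) (e : E) : E :=
  match w with
  | [::] => e
  | g_rho0 :: w' => rho0 (wact w' e)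
  | g_rho1 :: w' => rho1 (wact w' e)
  end.

(* (E, rho0, rho1) is the set of oriented edges of a trivalent ribbon graph:
   rho0 has all orbits of size exactly 3 (vertices of valency 3 with their
   cyclic orders), rho1 is a fixed-point-free involution (edge reversal). *)
Definition trivalent_ribbon : Prop :=
  (forall e, rho0 (rho0 (rho0 e)) = e) /\ (forall e, rho0 e != e) /\
  (forall e, rho1 (rho1 e) = e) /\ (forall e, rho1 e != e).

Definition ribbon_connected : Prop :=
  forall e f : E, exists w : word, wact w e = f.

Variable R : realType.

Definition Xmx (a : R) : 'M[R]_2 :=
  \matrix_(i < 2, j < 2)
    if (i == 0 :> nat) then (if (j == 0 :> nat) then 0 else - expR (a / 2))
    else (if (j == 0 :> nat) then expR (- (a / 2)) else 0).

Definition Lmx : 'M[R]_2 :=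
  \matrix_(i < 2, j < 2)
    if (i == 0 :> nat) then (if (j == 0 :> nat) then 0 else 1)
    else (if (j == 0 :> nat) then -1 else -1).

Variables (z : E -> R) (eps : E).

(* CHF on words, as SL_2(R) representatives of elements of PSL_2(R) *)
Fixpoint CHF (w : word) : 'M[R]_2 :=
  match w with
  | [::] => 1%:M
  | g_rho0 :: w' => Lmx *m CHF w'
  | g_rho1 :: w' => Xmx (z (wact w' eps)) *m CHF w'
  end.

(* Preimage in SL_2(R) of Delta(Gamma,z,eps) = CHF(B(E,eps)) in PSL_2(R) *)
Definition Delta_lift (M : 'M[R]_2) : Prop :=
  exists w : word, wact w eps = eps /\ (M = CHF w \/ M = - CHF w).

End Ribbon.

(* A set S of 2x2 real matrices, closed under M |-> -M, representing its image
   in PSL_2(R) = SL_2(R)/{+-1}, is a Fuchsian group: it is contained in SL_2(R),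
   its image is a subgroup of PSL_2(R), and it is discrete (equivalently, since
   SL_2(R) -> PSL_2(R) is a 2-sheeted covering, the preimage S is discrete in
   SL_2(R), with the topology given by the entries). *)
Definition fuchsian_lift (R : realType) (S : 'M[R]_2 -> Prop) : Prop :=
  (forall M, S M -> \det M = 1) /\
  (forall M, S M -> S (- M)) /\
  S 1%:M /\
  (forall M N, S M -> S N -> S (M *m N)) /\
  (forall M, S M -> S (invmx M)) /\
  (forall M, S M -> exists2 d : R, 0 < d &
     forall N, S N -> (forall i j, `|N i j - M i j| < d) -> N = M).

(* Every element of Delta is +-CHF of a reduced word, one alternating X_a with L or
   L^2 = L^-1.  The matrices X_a L and -X_a L^2 are nonnegative with ordered
   columns, and left multiplication by a nonnegative matrix preserves this cone;
   so a nonempty reduced word evaluates to +-L^f P T with f < 3, P in the cone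
   (or P = 1) and T in {1, X_a}.  Sign considerations show that such a product
   is never entrywise 1/2-close to +-1.  Hence 1 is isolated in the group Delta,
   and by left translation so is every element. *)
From HB Require Import structures.
From mathcomp Require Import all_boot all_order all_algebra perm.
From mathcomp Require Import reals.
From mathcomp Require Import sequences exp.
From mathcomp Require Import ring lra.
Set Implicit Arguments. Unset Strict Implicit. Unset Printing Implicit Defensive.
Import Order.TTheory GRing.Theory Num.Theory.
Local Open Scope ring_scope.

Section Isolated.
Variables (R : realFieldType) (n : nat).

Definition mx_ball (M : 'M[R]_n) (d : R) (N : 'M[R]_n) := forall i j, `|N i j - M i j| < d.

Definition mx_norm1 (K : 'M[R]_n) := \sum_i \sum_k `|K i k|.

Lemma mx_norm1_ge0 K : 0 <= mx_norm1 K.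
Proof. by apply: sumr_ge0 => i _; apply: sumr_ge0. Qed.

Lemma mx_ball_mull (K M N : 'M[R]_n) d : 0 < d ->
  mx_ball M d N -> mx_ball (K *m M) ((mx_norm1 K + 1) * d) (K *m N).
Proof.
move=> d_gt0 MN i j.
have -> : (K *m N) i j - (K *m M) i j = (K *m (N - M)) i j by rewrite mulmxBr !mxE.
rewrite mxE.
have row_le : \sum_k `|K i k| <= mx_norm1 K.
  rewrite /mx_norm1 [X in _ <= X](bigD1 i) //= lerDl.
  by apply: sumr_ge0 => i' _; apply: sumr_ge0.
apply: (le_lt_trans (ler_norm_sum _ _ _)).
apply: (@le_lt_trans _ _ (\sum_k `|K i k| * d)).
  apply: ler_sum => k _; rewrite normrM mxE ler_wpM2l //.
  by rewrite !mxE in MN *; exact/ltW/MN.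
rewrite -mulr_suml ltr_pM2r //; lra.
Qed.

Variable S : 'M[R]_n -> Prop.

Definition isolated (M : 'M[R]_n) :=
  exists2 d, 0 < d & forall N, S N -> mx_ball M d N -> N = M.

Hypotheses (S_unit : forall M, S M -> M \in unitmx)
  (S_mul : forall M N, S M -> S N -> S (M *m N))
  (S_inv : forall M, S M -> S (invmx M)).

Lemma isolated_of_isolated1 : isolated 1%:M -> forall M, S M -> isolated M.
Proof.
move=> [d0 d0_gt0 iso1] M SM; set c := mx_norm1 (invmx M) + 1.
have c_gt0 : 0 < c by rewrite /c; have := mx_norm1_ge0 (invmx M); lra.
exists (d0 / c) => [|N SN MN]; first exact: divr_gt0.
have MN1 : invmx M *m N = 1%:M.
  apply: iso1; first exact: S_mul (S_inv SM) SN.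
  rewrite -(mulVmx (S_unit SM)) -[d0](@mulfVK _ c) ?gt_eqF // mulrC.
  exact: mx_ball_mull (divr_gt0 _ _) MN.
by rewrite -[N]mul1mx -(mulmxV (S_unit SM)) -mulmxA MN1 mulmx1.
Qed.

End Isolated.

Section SignEquivalence.
Variables (R : comUnitRingType) (n : nat).
Implicit Types A B C K M : 'M[R]_n.

Definition eqpm A B := A = B \/ A = - B.

Lemma eqpm_refl A : eqpm A A. Proof. by left. Qed.

Lemma eqpm_sym A B : eqpm A B -> eqpm B A.
Proof. by case=> ->; [left | right; rewrite opprK]. Qed.

Lemma eqpm_trans A B C : eqpm A B -> eqpm B C -> eqpm A C.
Proof. by case=> ->; case=> ->; rewrite ?opprK; [left | right | right | left]. Qed.

Lemma eqpmNl A B : eqpm A B -> eqpm (- A) B.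
Proof. by case=> ->; [right | left; rewrite opprK]. Qed.

Lemma eqpm_mull K A B : eqpm A B -> eqpm (K *m A) (K *m B).
Proof. by case=> ->; [left | right; rewrite mulmxN]. Qed.

Lemma eqpm_mulr K A B : eqpm A B -> eqpm (A *m K) (B *m K).
Proof. by case=> ->; [left | right; rewrite mulNmx]. Qed.

Lemma invmx_mul1 K M : K *m M = 1%:M -> invmx M = K.
Proof.
by move=> KM1; have [_ uM] := mulmx1_unit KM1; rewrite -[K](mulmxK uM) KM1 mul1mx.
Qed.

Lemma eqpm_invmx A B M : eqpm (A *m B) 1%:M -> eqpm M B -> eqpm (invmx M) A.
Proof.
case=> AB1 [] ->; [left | right | right | left]; apply: invmx_mul1;
  by rewrite ?mulmxN ?mulNmx ?AB1 ?opprK.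
Qed.

End SignEquivalence.

Section Cone.
Variable R : numDomainType.

Definition nonneg_mx m n (M : 'M[R]_(m, n)) := forall i j, 0 <= M i j.

Definition col_ordered m (M : 'M[R]_(m, 2)) :=
  (forall i, M i 0 <= M i 1) \/ (forall i, M i 1 <= M i 0).

Lemma nonneg_mulmx m n p (K : 'M[R]_(m, n)) (M : 'M[R]_(n, p)) :
  nonneg_mx K -> nonneg_mx M -> nonneg_mx (K *m M).
Proof. by move=> K0 M0 i j; rewrite mxE; apply: sumr_ge0 => k _; exact: mulr_ge0. Qed.

Lemma col_ordered_mull m n (K : 'M[R]_(m, n)) (M : 'M[R]_(n, 2)) :
  nonneg_mx K -> col_ordered M -> col_ordered (K *m M).
Proof.
move=> K0 [le_col|le_col]; [left|right] => i; rewrite !mxE;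
  by apply: ler_sum => k _; rewrite ler_wpM2l.
Qed.

Definition cone (M : 'M[R]_2) := nonneg_mx M /\ col_ordered M.

Lemma cone_mull (K P : 'M[R]_2) : cone K -> cone P \/ P = 1%:M -> cone (K *m P).
Proof.
move=> [K0 Kord] [[P0 Pord]|->]; last by rewrite mulmx1.
by split; [exact: nonneg_mulmx | exact: col_ordered_mull].
Qed.

End Cone.

Section Mx2.
Variable R : realType.

Definition mx2 (a b c d : R) : 'M[R]_2 :=
  \matrix_(i < 2, j < 2)
    if (i == 0 :> nat) then (if (j == 0 :> nat) then a else b)
    else (if (j == 0 :> nat) then c else d).

Lemma ord2_ind (P : 'I_2 -> Prop) : P 0 -> P 1 -> forall i, P i.
Proof.
move=> P0 P1 [[|[|//]] lt_i2].
  by rewrite (_ : Ordinal lt_i2 = 0) //; apply/val_inj.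
by rewrite (_ : Ordinal lt_i2 = 1) //; apply/val_inj.
Qed.

Lemma mx2_eta (M : 'M[R]_2) : M = mx2 (M 0 0) (M 0 1) (M 1 0) (M 1 1).
Proof. by apply/matrixP; elim/ord2_ind; elim/ord2_ind; rewrite !mxE. Qed.

Lemma mulmx_mx2 a b c d a' b' c' d' : mx2 a b c d *m mx2 a' b' c' d' =
  mx2 (a * a' + b * c') (a * b' + b * d') (c * a' + d * c') (c * b' + d * d').
Proof.
apply/matrixP; elim/ord2_ind; elim/ord2_ind;
  by rewrite !mxE !big_ord_recl big_ord0 !mxE /= addr0.
Qed.

Lemma opp_mx2 a b c d : - mx2 a b c d = mx2 (- a) (- b) (- c) (- d).
Proof. by apply/matrixP; elim/ord2_ind; elim/ord2_ind; rewrite !mxE. Qed.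

Lemma mx2_1 : 1%:M = mx2 1 0 0 1.
Proof. by apply/matrixP; elim/ord2_ind; elim/ord2_ind; rewrite !mxE. Qed.

Lemma Lmx_mx2 : Lmx R = mx2 0 1 (-1) (-1).
Proof. by apply/matrixP; elim/ord2_ind; elim/ord2_ind; rewrite !mxE. Qed.

Lemma Xmx_mx2 a : Xmx a = mx2 0 (- expR (a / 2)) (expR (- (a / 2))) 0.
Proof. by apply/matrixP; elim/ord2_ind; elim/ord2_ind; rewrite !mxE. Qed.

Lemma det_mx2 a b c d : \det (mx2 a b c d) = a * d - b * c.
Proof.
rewrite (expand_det_row _ 0) !big_ord_recl big_ord0 /cofactor !mxE /=.
by rewrite !det_mx11 !mxE /= expr0 expr1 addr0 mul1r mulN1r mulrN.
Qed.

Lemma cone_mx2 p q r t : cone (mx2 p q r t) <->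
  [/\ 0 <= p, 0 <= q, 0 <= r, 0 <= t & p <= q /\ r <= t \/ q <= p /\ t <= r].
Proof.
rewrite /cone /nonneg_mx /col_ordered; split => [[M0 ord]|[p0 q0 r0 t0 ord]].
  have := M0 0 0; have := M0 0 1; have := M0 1 0; have := M0 1 1; rewrite !mxE /= => *.
  by split => //; case: ord => le; have := le 0; have := le 1; rewrite !mxE /= => *; [left|right].
split; first by elim/ord2_ind; elim/ord2_ind; rewrite mxE.
by case: ord => [[le1 le2]|[le1 le2]]; [left|right]; elim/ord2_ind; rewrite !mxE.
Qed.

Lemma mx_ball1_mx2 a b c d : mx_ball 1%:M (1 / 2) (mx2 a b c d) ->
  [/\ 1 / 2 < a < 3 / 2, - (1 / 2) < b < 1 / 2, - (1 / 2) < c < 1 / 2 & 1 / 2 < d < 3 / 2].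
Proof.
move=> ball; have := ball 0 0; have := ball 0 1; have := ball 1 0; have := ball 1 1.
rewrite !mxE /= !ltr_norml !subr0 => /andP[? ?] /andP[? ?] /andP[? ?] /andP[? ?].
by split; apply/andP; split; lra.
Qed.

End Mx2.

Section Words.
Variables (E : finType) (rho0 rho1 : {perm E}) (R : realType) (z : E -> R).
Hypotheses (rho0_cube : forall e, rho0 (rho0 (rho0 e)) = e)
  (rho1_invol : forall e, rho1 (rho1 e) = e)
  (z_rho1 : forall e, z (rho1 e) = z e).

Local Notation act := (wact rho0 rho1).
Local Notation C := (CHF rho0 rho1 z).

Lemma wact_cat u v e : act (u ++ v) e = act u (act v e).
Proof. by elim: u => [|[] u IH] //=; rewrite IH. Qed.

Lemma CHF_cat u v e : C e (u ++ v) = C (act v e) u *m C e v.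
Proof. by elim: u => [|[] u IH] /=; rewrite ?mul1mx // IH ?wact_cat mulmxA. Qed.

Lemma Xmx_sqr a : Xmx a *m Xmx a = - 1%:M :> 'M[R]_2.
Proof.
rewrite Xmx_mx2 mulmx_mx2 mx2_1 opp_mx2 !(mulr0, mul0r, addr0, add0r, oppr0).
by rewrite mulNr mulrN -!expRD addrN addNr expR0.
Qed.

Lemma Lmx_cube : Lmx R *m (Lmx R *m Lmx R) = 1%:M.
Proof. by rewrite Lmx_mx2 !mulmx_mx2 mx2_1; congr mx2; ring. Qed.

Lemma det_CHF e w : \det (C e w) = 1.
Proof.
elim: w => [|[] w IH] /=; rewrite ?det1 // det_mulmx IH mulr1.
  by rewrite Lmx_mx2 det_mx2; ring.
by rewrite Xmx_mx2 det_mx2 mul0r sub0r mulNr opprK -expRD addrN expR0.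
Qed.

Definition cons_reduce (g : gen) (r : word) : word :=
  match g, r with
  | g_rho1, g_rho1 :: r' => r'
  | g_rho0, g_rho0 :: g_rho0 :: r' => r'
  | _, _ => g :: r
  end.

Fixpoint reduce (w : word) : word :=
  if w is g :: w' then cons_reduce g (reduce w') else [::].

Fixpoint reduced (r : word) : bool :=
  match r with
  | g_rho1 :: g_rho1 :: _ => false
  | g_rho0 :: g_rho0 :: g_rho0 :: _ => false
  | _ :: r' => reduced r'
  | [::] => true
  end.

Lemma wact_cons_reduce g r e : act (cons_reduce g r) e = act (g :: r) e.
Proof. by case: g; case: r => [|[] [|[] r]] //=; rewrite ?rho0_cube ?rho1_invol. Qed.

Lemma CHF_cons_reduce g r e : eqpm (C e (cons_reduce g r)) (C e (g :: r)).
Proof.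
case: g; case: r => [|[] [|[] r]] /=; try exact: eqpm_refl.
  by left; rewrite !mulmxA -(mulmxA (Lmx R)) Lmx_cube mul1mx.
all: by right; rewrite mulmxA z_rho1 Xmx_sqr mulNmx mul1mx opprK.
Qed.

Lemma wact_reduce w e : act (reduce w) e = act w e.
Proof. by elim: w => [|g w IH] //=; rewrite wact_cons_reduce; case: g => /=; rewrite IH. Qed.

Lemma CHF_reduce w e : eqpm (C e (reduce w)) (C e w).
Proof.
elim: w => [|g w IH] /=; first exact: eqpm_refl.
apply: (eqpm_trans (CHF_cons_reduce _ _ _)).
by case: g => /=; rewrite ?wact_reduce; exact: eqpm_mull.
Qed.

Lemma reduced_reduce w : reduced (reduce w).
Proof. by elim: w => [|g w] //=; case: g; case: (reduce w) => [|[] [|[] [|[] r]]]. Qed.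

Fixpoint word_inv (w : word) : word :=
  if w is g :: w' then
    word_inv w' ++ (if g is g_rho0 then [:: g_rho0; g_rho0] else [:: g_rho1])
  else [::].

Lemma wact_word_inv w e : act (word_inv w) (act w e) = e.
Proof. by elim: w => [|[] w IH] //=; rewrite wact_cat /= ?rho0_cube ?rho1_invol. Qed.

Lemma CHF_word_inv w e : eqpm (C (act w e) (word_inv w) *m C e w) 1%:M.
Proof.
elim: w => [|[] w IH] /=; first by rewrite mul1mx; exact: eqpm_refl.
- rewrite CHF_cat /= rho0_cube mulmx1 -!mulmxA (mulmxA (Lmx R)).
  by rewrite (mulmxA (Lmx R *m Lmx R)) -(mulmxA (Lmx R)) Lmx_cube mul1mx.
- rewrite CHF_cat /= rho1_invol mulmx1 z_rho1 -!mulmxA (mulmxA (Xmx _)) Xmx_sqr.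
  by rewrite mulNmx mul1mx mulmxN; exact: eqpmNl.
Qed.

End Words.

Section PingPong.
Variable R : realType.
Local Notation L := (Lmx R).
Local Notation ball1 := (@mx_ball R 2 1%:M (1 / 2)).

Lemma cone_XL a : cone (Xmx a *m L).
Proof.
rewrite Xmx_mx2 Lmx_mx2 mulmx_mx2 cone_mx2 !(mulr0, mul0r, addr0, add0r, mulrN1, mulr1, opprK).
have := expR_gt0 (a / 2); have := expR_gt0 (- (a / 2)); split; lra.
Qed.

Lemma cone_XLL a : cone (- (Xmx a *m (L *m L))).
Proof.
rewrite Xmx_mx2 Lmx_mx2 !mulmx_mx2 opp_mx2 cone_mx2.
rewrite !(mulr0, mul0r, addr0, add0r, mulrN1, mulr1, mulN1r, mul1r, opprK, oppr0).
have := expR_gt0 (a / 2); have := expR_gt0 (- (a / 2)); split; lra.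
Qed.

(* [P = 1] covers the reduced words without a block [X L^e]; the side
   condition excludes the empty word. *)
Definition cone_form f (M : 'M[R]_2) := exists P T,
  [/\ (f < 3)%N, T = 1%:M \/ (exists a, T = Xmx a),
      cone P \/ P = 1%:M /\ ((0 < f)%N \/ T != 1%:M)
    & eqpm M (L ^+ f *m P *m T)].

Lemma cone_form_eqpm f M N : eqpm N M -> cone_form f M -> cone_form f N.
Proof.
by move=> hN [P [T [lt_f3 hT hP hM]]]; exists P, T; split => //; exact: eqpm_trans hN hM.
Qed.

Lemma cone_form_L f M : (f < 2)%N -> cone_form f M -> cone_form f.+1 (L *m M).
Proof.
move=> lt_f2 [P [T [_ hT hP hM]]]; exists P, T; split => //.
  by case: hP => [|[-> _]]; [left | right; split => //; left].
by rewrite exprS -mulmxE -!mulmxA; apply: eqpm_mull; rewrite !mulmxA.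
Qed.

Lemma cone_form_X a f M : (0 < f)%N -> cone_form f M -> cone_form 0 (Xmx a *m M).
Proof.
move=> f_gt0 [P [T [lt_f3 hT hP hM]]].
have hP' : cone P \/ P = 1%:M by case: hP => [|[]]; [left | right].
have XM : eqpm (Xmx a *m M) (Xmx a *m L ^+ f *m P *m T).
  by rewrite -!mulmxA; apply: eqpm_mull; rewrite !mulmxA.
case: f f_gt0 lt_f3 XM {hM hP} => [|[|[|//]]] // _ _ XM.
  exists (Xmx a *m L *m P), T; split => //.
    by left; exact: cone_mull (cone_XL a) hP'.
  by rewrite expr0 mul1mx; rewrite expr1 in XM.
exists (- (Xmx a *m (L *m L)) *m P), T; split => //.
  by left; exact: cone_mull (cone_XLL a) hP'.
apply: (eqpm_trans XM); rewrite expr0 mul1mx expr2 -mulmxE !mulNmx.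
by apply: eqpm_sym; apply: eqpmNl; rewrite mulmxA; exact: eqpm_refl.
Qed.

Lemma cone_not_ball1 f (P T : 'M[R]_2) : (f < 3)%N -> cone P ->
  (T = 1%:M \/ exists a, T = Xmx a) ->
  ~ ball1 (L ^+ f *m P *m T) /\ ~ ball1 (- (L ^+ f *m P *m T)).
Proof.
rewrite (mx2_eta P) => lt_f3 /cone_mx2[p0 q0 r0 t0 ord] [->|[a ->]].
  rewrite mulmx1; case: f lt_f3 => [|[|[|//]]] _;
  rewrite ?expr0 ?expr1 ?expr2 -?mulmxE ?mul1mx ?Lmx_mx2 ?mulmx_mx2 ?opp_mx2;
  by split => /mx_ball1_mx2[/andP[? ?] /andP[? ?] /andP[? ?] /andP[? ?]]; lra.
rewrite Xmx_mx2; have := expR_gt0 (a / 2); have := expR_gt0 (- (a / 2)).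
move: (expR _) (expR _) => s' s s'0 s0.
case: f lt_f3 => [|[|[|//]]] _;
  rewrite ?expr0 ?expr1 ?expr2 -?mulmxE ?mul1mx ?Lmx_mx2 ?mulmx_mx2 ?opp_mx2;
  by split => /mx_ball1_mx2[/andP[? ?] /andP[? ?] /andP[? ?] /andP[? ?]]; nra.
Qed.

Lemma Xmx_neq1 a : Xmx a != 1%:M :> 'M[R]_2.
Proof. by apply/eqP => /matrixP/(_ 0 0); rewrite !mxE /= => /eqP; rewrite eq_sym oner_eq0. Qed.

Lemma Lpow_not_ball1 f (T : 'M[R]_2) : (f < 3)%N ->
  T = 1%:M /\ (0 < f)%N \/ (exists a, T = Xmx a) ->
  ~ ball1 (L ^+ f *m T) /\ ~ ball1 (- (L ^+ f *m T)).
Proof.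
move=> lt_f3 [[-> f_gt0]|[a ->]].
  rewrite mulmx1; case: f f_gt0 lt_f3 => [|[|[|//]]] // _ _;
  rewrite ?expr1 ?expr2 -?mulmxE ?Lmx_mx2 ?mulmx_mx2 ?opp_mx2;
  by split => /mx_ball1_mx2[/andP[? ?] /andP[? ?] /andP[? ?] /andP[? ?]]; lra.
rewrite Xmx_mx2; have := expR_gt0 (a / 2); have := expR_gt0 (- (a / 2)).
move: (expR _) (expR _) => s' s s'0 s0.
case: f lt_f3 => [|[|[|//]]] _;
  rewrite ?expr0 ?expr1 ?expr2 -?mulmxE ?mul1mx ?Lmx_mx2 ?mulmx_mx2 ?opp_mx2;
  by split => /mx_ball1_mx2[/andP[? ?] /andP[? ?] /andP[? ?] /andP[? ?]]; nra.
Qed.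

Lemma cone_form_not_ball1 f M : cone_form f M -> ~ ball1 M.
Proof.
move=> [P [T [lt_f3 hT hP hM]]].
have [] : ~ ball1 (L ^+ f *m P *m T) /\ ~ ball1 (- (L ^+ f *m P *m T)).
  case: hP => [coneP|[-> hf]]; first exact: cone_not_ball1.
  rewrite mulmx1; apply: Lpow_not_ball1 => //.
  by case: hT hf => [-> [f_gt0|]|]; [left | rewrite eqxx | right].
by case: hM => ->.
Qed.

Lemma opp1_not_ball1 : ~ ball1 (- 1%:M).
Proof. by move=> /(_ 0 0); rewrite !mxE /= ltr_norml; lra. Qed.

End PingPong.

Definition lead_rho0 (r : word) : nat :=
  match r with
  | g_rho0 :: g_rho0 :: _ => 2
  | g_rho0 :: _ => 1
  | _ => 0
  end.

Lemma cone_form_CHF (E : finType) (rho0 rho1 : {perm E}) (R : realType)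
    (z : E -> R) e g r :
  reduced (g :: r) -> cone_form (lead_rho0 (g :: r)) (CHF rho0 rho1 z e (g :: r)).
Proof.
elim: r g => [|g' r IH] g red_gr.
  case: g {red_gr} => /=.
    exists 1%:M, 1%:M; split => //; first by left.
      by right; split => //; left.
    by rewrite expr1 !mulmx1; exact: eqpm_refl.
  exists 1%:M, (Xmx (z e)); split => //; first by right; exists (z e).
    by right; split => //; right; exact: Xmx_neq1.
  by rewrite expr0 !mul1mx mulmx1; exact: eqpm_refl.
have red_r : reduced (g' :: r) by move: red_gr; case: g; case: g'; case: r {IH} => [|[] r].
have {}IH := IH g' red_r; case: g red_gr => /= red_gr.
  by case: g' red_gr red_r IH; case: r => [|[] r] //= _ _ IH; exact: cone_form_L _ IH.
by case: g' red_gr red_r IH => //; case: r => [|[] r] _ _ IH; exact: cone_form_X _ IH.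
Qed.

Section DeltaLift.
Variables (E : finType) (rho0 rho1 : {perm E}) (R : realType) (z : E -> R) (eps : E).
Hypotheses (rho0_cube : forall e, rho0 (rho0 (rho0 e)) = e)
  (rho1_invol : forall e, rho1 (rho1 e) = e)
  (z_rho1 : forall e, z (rho1 e) = z e).

Local Notation S := (Delta_lift rho0 rho1 z eps).

Lemma Delta_lift_det M : S M -> \det M = 1.
Proof.
move=> [w [_ [->|->]]]; rewrite ?det_CHF //.
by rewrite -scaleN1r detZ det_CHF sqrrN !expr1n mulr1.
Qed.

Lemma Delta_lift_unit M : S M -> M \in unitmx.
Proof. by move=> /Delta_lift_det detM; rewrite unitmxE detM unitr1. Qed.

Lemma Delta_liftN M : S M -> S (- M).
Proof. by move=> [w [fix_w hM]]; exists w; split => //; exact: eqpmNl. Qed.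

Lemma Delta_lift1 : S 1%:M.
Proof. by exists [::]; split => //; exact: eqpm_refl. Qed.

Lemma Delta_lift_mul M N : S M -> S N -> S (M *m N).
Proof.
move=> [u [fix_u hM]] [v [fix_v hN]]; exists (u ++ v); split.
  by rewrite wact_cat fix_v fix_u.
rewrite CHF_cat fix_v; exact: eqpm_trans (eqpm_mulr _ hM) (eqpm_mull _ hN).
Qed.

Lemma Delta_lift_inv M : S M -> S (invmx M).
Proof.
move=> [w [fix_w hM]]; exists (word_inv w); split.
  by rewrite -{1}fix_w wact_word_inv.
apply: eqpm_invmx hM; rewrite -{1}fix_w; exact: CHF_word_inv.
Qed.

Lemma Delta_lift_isolated1 : isolated S 1%:M.
Proof.
exists (1 / 2) => [|N [w [_ hN]] ball_N]; first lra.
have {}hN := eqpm_trans hN (eqpm_sym (CHF_reduce rho0_cube rho1_invol z_rho1 w eps)).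
have := reduced_reduce w; case: (reduce w) hN => [|g r] hN red_r.
  by move: ball_N; case: hN => -> // /opp1_not_ball1.
by case: (cone_form_not_ball1 (cone_form_eqpm hN (cone_form_CHF rho0 rho1 z eps red_r)) ball_N).
Qed.

End DeltaLift.

Theorem mainTheorem2 (E : finType) (rho0 rho1 : {perm E}) (R : realType)
  (z : E -> R) (eps : E) :
  trivalent_ribbon rho0 rho1 ->
  ribbon_connected rho0 rho1 ->
  (forall g : E, z (rho1 g) = z g) ->
  fuchsian_lift (Delta_lift rho0 rho1 z eps).
Proof.
move=> [rho0_cube [_ [rho1_invol _]]] _ z_rho1.
split; first exact: Delta_lift_det.
split; first exact: Delta_liftN.
split; first exact: Delta_lift1.
split; first exact: Delta_lift_mul.
split; first exact: Delta_lift_inv.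
apply: isolated_of_isolated1.
- exact: Delta_lift_unit.
- exact: Delta_lift_mul.
- exact: Delta_lift_inv.
- exact: Delta_lift_isolated1.
Qed.
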